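(* Let $\delta\in(0,1)$, $D\ge1$ and $q\ge2$ be constants, let $q_c$ be an integer with $1\le q_c\le q$, and let $\alpha=\frac{\delta}{100D\log q}$. Define $g_\alpha(k)=\sum_{i=0}^{k-1}q_c^{\alpha i}$. Let $\mathcal F$ be any family of probability distributions $\nu$, each supported on subsets of a set $U_\nu$ with $|U_\nu|\le D$ and satisfying $\mathbb E_{S\sim\nu}[|S|]\le1-\delta$. Then $$\beta(\alpha):=\sup_{\nu\in\mathcal F}\sum_{S}\nu(S)^{1-\alpha}g_\alpha(|S|)<1.$$
   Context: $\log$ is the natural logarithm. (In the paper, $\mathcal F$ is the set of distributions $\nu$ of the set $S$ sampled in the invocations of an abstract marginal sampler whose continuation sets have size at most $q_c$, under the hypotheses $\mathbb E_\nu|S|\le1-\delta$ and $|\bigcup_{S\in\mathrm{supp}\nu}S|\le D$.) *)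

From mathcomp Require Import all_boot all_order all_algebra.
From mathcomp Require Import all_classical all_reals all_analysis.
Set Implicit Arguments. Unset Strict Implicit. Unset Printing Implicit Defensive.
Import Order.TTheory GRing.Theory Num.Theory.
Local Open Scope ring_scope.

Definition alpha_of {R : realType} (delta D q : R) : R :=
  delta / (100 * D * ln q).

Definition g_alpha {R : realType} (qc : nat) (alpha : R) (k : nat) : R :=
  \sum_(0 <= i < k) powR (qc%:R) (alpha * i%:R).

Definition is_distr {R : realType} (U : finType) (nu : {set U} -> R) : Prop :=
  (forall S, 0 <= nu S) /\ \sum_(S : {set U}) nu S = 1.

Definition exp_size {R : realType} (U : finType) (nu : {set U} -> R) : R :=
  \sum_(S : {set U}) nu S * (#|S|)%:R.

Definition beta_sum {R : realType} (qc : nat) (alpha : R)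
    (U : finType) (nu : {set U} -> R) : R :=
  \sum_(S : {set U}) powR (nu S) (1 - alpha) * g_alpha qc alpha #|S|.

From mathcomp Require Import all_boot all_order all_algebra.
From mathcomp Require Import all_classical all_reals all_analysis.
From mathcomp Require Import ring lra.
Import Order.TTheory GRing.Theory Num.Theory.
Local Open Scope ring_scope.

(* Write p = 1 - alpha.  As x `^ p is concave, x `^ p <= N^-p (p N x + 1 - p)
   (its tangent at x = 1/N), and g_alpha(k) <= k q^(alpha D) for k <= D.  Hence
   sum_S nu(S)^p g_alpha(|S|) <= q^(alpha D) N^-p (p N E|S| + (1 - p) sum_S |S|),
   which is at most q^(alpha D) N^alpha (1 - p delta) once N >= sum_S |S|.
   The choice N = q^(2D) >= 4^|U| is uniform in nu and makes the prefactor
   q^(3 alpha D) = exp(3 delta / 100); as alpha <= 1/50, the factor 1 - p delta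
   beats it. *)

Section RealFacts.
Context {R : realType}.

Lemma powR_le_tangent1 (y p : R) : 0 <= y -> 0 < p < 1 ->
  y `^ p <= p * y + (1 - p).
Proof.
move=> y0 /andP[p0 p1].
have p1' : 0 < 1 - p by rewrite subr_gt0.
(* Young's inequality for y `^ p and 1 with conjugate exponents 1/p, 1/(1-p). *)
have := @conjugate_powR R (y `^ p) 1 p^-1 (1 - p)^-1 (powR_ge0 _ _) ler01.
rewrite !invr_gt0 p0 p1' !invrK addrC subrK => /(_ isT isT erefl).
by rewrite mulr1 -powRrM mulfV ?gt_eqF // powRr1 // powR1 mul1r mulrC.
Qed.

Lemma powR_le_tangent (x N p : R) : 0 <= x -> 0 < N -> 0 < p < 1 ->
  x `^ p <= N `^ (- p) * (p * N * x + (1 - p)).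
Proof.
move=> x0 N0 p01.
have Np0 : 0 < N `^ p by apply: powR_gt0.
rewrite powRN -(ler_pM2l Np0) mulrA mulfV ?gt_eqF // mul1r.
by rewrite -powRM ?(ltW N0) // -mulrA powR_le_tangent1 // (mulr_ge0 (ltW N0) x0).
Qed.

Lemma ln_ge1BV (x : R) : 0 < x -> 1 - x^-1 <= ln x.
Proof.
move=> x0; have xV0 : 0 < x^-1 by rewrite invr_gt0.
have := @le_ln1Dx R (x^-1 - 1); rewrite subrKC lnV ?posrE //; lra.
Qed.

Lemma expR_mulB_lt1 (x y : R) : x < y -> expR x * (1 - y) < 1.
Proof.
move=> xy; apply: (@lt_le_trans _ _ (expR x * (1 - x))).
  by rewrite ltr_pM2l ?expR_gt0 // ltrD2l ltrN2.
have expRxNx : expR x * expR (- x) = 1 by rewrite -expRD subrr expR0.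
by rewrite -[leRHS]expRxNx ler_pM2l ?expR_gt0 // expR_ge1Dx.
Qed.

End RealFacts.

Lemma g_alpha_le (R : realType) (qc k : nat) (alpha q D : R) :
  (1 <= qc)%N -> qc%:R <= q -> 0 <= alpha -> k%:R <= D ->
  g_alpha qc alpha k <= k%:R * q `^ (alpha * D).
Proof.
move=> qc1 qcq a0 kD.
have q1 : 1 <= q by apply: le_trans qcq; rewrite ler1n.
have -> : k%:R * q `^ (alpha * D) = \sum_(0 <= i < k) q `^ (alpha * D).
  by rewrite sumr_const_nat subn0 mulr_natl.
apply: ler_sum_nat => i /andP[_ ik].
apply: (@le_trans _ _ (q `^ (alpha * i%:R))).
  by apply: ge0_ler_powR; rewrite ?nnegrE ?mulr_ge0 ?(le_trans ler01 q1).
apply: ler_powR => //; apply: ler_wpM2l => //.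
by apply: le_trans kD; rewrite ler_nat ltnW.
Qed.

Lemma sum_card_set_le (U : finType) : (\sum_(S : {set U}) #|S| <= 4 ^ #|U|)%N.
Proof.
apply: (@leq_trans (\sum_(S : {set U}) #|U|)).
  by apply: leq_sum => S _; apply: max_card.
have card_setU : #|{set U}| = (2 ^ #|U|)%N.
  by rewrite -[#|{set U}|]cardsT -powersetT card_powerset cardsT.
rewrite sum_nat_const card_setU -[4%N]/(2 * 2)%N expnMn leq_mul2l.
by rewrite ltnW ?orbT // ltn_expl.
Qed.

Lemma sum_card_set_le_powR (R : realType) (U : finType) (q D : R) :
  2 <= q -> #|U|%:R <= D -> \sum_(S : {set U}) (#|S|%:R : R) <= q `^ (2 * D).
Proof.
move=> q2 UD; rewrite -natr_sum.
apply: (@le_trans _ _ (4 ^ #|U|)%:R); first by rewrite ler_nat sum_card_set_le.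
have q0 : 0 <= q by apply: le_trans q2.
apply: (@le_trans _ _ (q `^ (2 * #|U|%:R))); last first.
  by apply: ler_powR; [apply: le_trans q2; rewrite ler1n | rewrite ler_pM2l].
rewrite -natrM powR_mulrn // exprM natrX lerXn2r ?nnegrE ?exprn_ge0 //.
by rewrite expr2; nra.
Qed.

Section BetaSum.
Context {R : realType} {qc : nat} {alpha : R} {U : finType} {nu : {set U} -> R}.
Hypotheses (alpha_gt0 : 0 < alpha) (alpha_lt1 : alpha < 1).
Hypothesis nu_ge0 : forall S, 0 <= nu S.

Lemma beta_sum_le (K N delta : R) :
  0 <= K -> 0 < N ->
  (forall S : {set U}, g_alpha qc alpha #|S| <= #|S|%:R * K) ->
  \sum_(S : {set U}) (#|S|%:R : R) <= N ->
  exp_size nu <= 1 - delta ->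
  beta_sum qc alpha nu <= K * N `^ alpha * (1 - (1 - alpha) * delta).
Proof.
move=> K0 N0 gK sumN Edelta.
set p := 1 - alpha.
have p_gt0 : 0 < p by rewrite subr_gt0.
have p01 : 0 < p < 1 by rewrite p_gt0 ltrBlDr ltrDl.
have Sp : 1 - p = alpha by rewrite /p subKr.
set c := K * N `^ (- p).
have c0 : 0 <= c by rewrite mulr_ge0 ?powR_ge0.
have term S : (nu S) `^ p * g_alpha qc alpha #|S| <=
    c * p * N * (nu S * #|S|%:R) + c * (1 - p) * #|S|%:R.
  apply: (@le_trans _ _ (N `^ (- p) * (p * N * nu S + (1 - p)) * (#|S|%:R * K))).
    apply: ler_pM; rewrite ?powR_ge0 ?powR_le_tangent //.
    by apply: sumr_ge0 => *; apply: powR_ge0.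
  by rewrite /c le_eqVlt; apply/predU1P; left; ring.
have cN : c * N = K * N `^ alpha.
  rewrite /c -mulrA -[X in _ * (_ * X)]powRr1 ?ltW // -powRD ?(gt_eqF N0) ?implybT //.
  by rewrite addrC Sp.
rewrite /beta_sum -/p; apply: le_trans (ler_sum _ (fun S _ => term S)) _.
rewrite big_split /= -!mulr_sumr -[\sum_S nu S * _]/(exp_size nu).
apply: le_trans (lerD (ler_wpM2l _ Edelta) (ler_wpM2l _ sumN)) _.
- by rewrite mulr_ge0 ?(mulr_ge0 c0) ?ltW.
- by rewrite Sp mulr_ge0 // ltW.
by rewrite -cN le_eqVlt; apply/predU1P; left; ring.
Qed.

End BetaSum.

Theorem lemma4p5 (R : realType) (delta D q : R) (qc : nat) :
  0 < delta -> delta < 1 -> 1 <= D -> 2 <= q ->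
  (1 <= qc)%N -> qc%:R <= q ->
  exists beta : R, beta < 1 /\
    forall (U : finType) (nu : {set U} -> R),
      (#|U|)%:R <= D -> is_distr nu -> exp_size nu <= 1 - delta ->
      beta_sum qc (alpha_of delta D q) nu <= beta.
Proof.
move=> d0 d1 D1 q2 qc1 qcq.
set a := alpha_of delta D q.
have q0 : 0 < q by lra.
have lnq : 1 / 2 <= ln q.
  have : q^-1 <= 2^-1 by rewrite lef_pV2 ?posrE //; lra.
  have := ln_ge1BV q q0; lra.
have aDlnq : a * D * ln q = delta / 100.
  by rewrite /a /alpha_of; field; rewrite !gt_eqF //; lra.
have a0 : 0 < a by rewrite /a /alpha_of divr_gt0 // !mulr_gt0 //; lra.
have a_small : a <= 1 / 50.
  have : a * 1 * (1 / 2) <= a * D * ln q by rewrite ler_pM ?ler_wpM2l //; lra.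
  lra.
have powRq x : q `^ x = expR (x * ln q) by rewrite /powR gt_eqF.
exists (q `^ (3 * (a * D)) * (1 - (1 - a) * delta)); split.
  rewrite powRq (_ : 3 * (a * D) * ln q = 3 * (delta / 100)); last by rewrite -aDlnq; ring.
  by apply: expR_mulB_lt1; nra.
move=> U nu UD [nu0 _] Edelta.
apply: (@le_trans _ _ (q `^ (a * D) * (q `^ (2 * D)) `^ a * (1 - (1 - a) * delta))).
  apply: beta_sum_le => //.
  - lra.
  - exact: powR_ge0.
  - exact: powR_gt0.
  - move=> S; apply: g_alpha_le => //; first exact: ltW.
    by apply: le_trans UD; rewrite ler_nat max_card.
  - exact: sum_card_set_le_powR.
rewrite -powRrM -powRD ?(gt_eqF q0) ?implybT //.
by rewrite le_eqVlt; apply/predU1P; left; congr (q `^ _ * _); ring.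
Qed.
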